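(* Let $a,b\in[0,1]$ with $a+b>1$, $\bar a=1-a$, $\bar b=1-b$, $\gamma=2^{\frac{H(b)-H(a)}{a+b-1}}$, $K=\frac{1}{(a+b-1)(\gamma+1)}$. Define functions $P_0,P_1$ on $\{0,1\}^n$, $n\ge0$, by $P_0(\emptyset)=P_1(\emptyset)=1$ and for $u\in\{0,1\}^{n-1}$: $P_0(0,u)=K(b\gamma P_0(u)-\bar bP_1(u))$, $P_0(1,u)=K(-\bar a\gamma P_0(u)+aP_1(u))$, $P_1(0,u)=K(aP_0(u)-\bar a\gamma P_1(u))$, $P_1(1,u)=K(-\bar bP_0(u)+b\gamma P_1(u))$. Define the sets $\mathcal L_0,\dots,\mathcal L_6$ of real numbers $\beta$: $\mathcal L_1=\{\max(\frac{\bar a}{\bar b}\gamma,\frac{\gamma(\bar a+b)-\sqrt{\gamma^2(\bar a+b)^2-4a\bar b}}{2\bar b})\le\beta\le\frac{\gamma(\bar a+b)+\sqrt{\gamma^2(\bar a+b)^2-4a\bar b}}{2\bar b}\}$, $\mathcal L_2=\{\frac{(a+\bar b)+\sqrt{(a+\bar b)^2-4\bar ab\gamma^2}}{2b\gamma}\le\beta\le\frac{\bar a}{\bar b}\gamma\}$, $\mathcal L_3=\{\beta\le\min(\frac{\bar a}{\bar b}\gamma,\frac{(a+\bar b)-\sqrt{(a+\bar b)^2-4\bar ab\gamma^2}}{2b\gamma})\}$, $\mathcal L_4=\{\beta\le\min(\frac{b\gamma}{a},\frac{\gamma(\bar a+b)-\sqrt{\gamma^2(\bar a+b)^2-4a\bar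 b}}{2a})\}$, $\mathcal L_5=\{\frac{\gamma(\bar a+b)+\sqrt{\gamma^2(\bar a+b)^2-4a\bar b}}{2a}\le\beta\le\frac{b\gamma}{a}\}$, $\mathcal L_6=\{\max(\frac{b\gamma}{a},\frac{(a+\bar b)-\sqrt{(a+\bar b)^2-4\bar ab\gamma^2}}{2\bar a\gamma})\le\beta\le\frac{(a+\bar b)+\sqrt{(a+\bar b)^2-4\bar ab\gamma^2}}{2\bar a\gamma}\}$, $\mathcal L_0=\{1\le\beta\le\min(\frac{a}{\bar a\gamma},\frac{b\gamma}{\bar b})\}$. If $(\mathcal L_1\cup\mathcal L_2\cup\mathcal L_3)\cap(\mathcal L_4\cup\mathcal L_5\cup\mathcal L_6)\cap\mathcal L_0\ne\emptyset$, then there exists $\beta$ with $1\le\beta\le\min\{\frac{a}{\bar a\gamma},\frac{b\gamma}{\bar b}\}$ such that for every $n\ge1$: if $\beta P_1(u)\ge P_0(u)$ and $\beta P_0(u)\ge P_1(u)$ for all $u\in\{0,1\}^{n-1}$, then $\beta P_1(x)\ge P_0(x)$ and $\beta P_0(x)\ge P_1(x)$ for all $x\in\{0,1\}^n$.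
   Context: $H(p)=-p\log_2p-(1-p)\log_2(1-p)$ is the binary entropy; $(0,u)$ denotes $0$ followed by the sequence $u$. *)

From Stdlib Require Import Reals Lra List.
Open Scope R_scope.

Definition log2 (x : R) : R := ln x / ln 2.

(* binary entropy; at p = 0 or 1 the terms p*log2 p vanish (0 * _ = 0) *)
Definition H (p : R) : R := - p * log2 p - (1 - p) * log2 (1 - p).

Definition gam (a b : R) : R := Rpower 2 ((H b - H a) / (a + b - 1)).
Definition Kc (a b : R) : R := 1 / ((a + b - 1) * (gam a b + 1)).

(* (P_0 u, P_1 u) for u : list bool, with (x :: u) meaning (x,u) *)
Fixpoint P01 (a b : R) (u : list bool) : R * R :=
  match u with
  | nil => (1, 1)
  | x :: u' =>
      let p0 := fst (P01 a b u') in
      let p1 := snd (P01 a b u') in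
      let g := gam a b in let K := Kc a b in
      if x then
        (K * (- (1 - a) * g * p0 + a * p1), K * (- (1 - b) * p0 + b * g * p1))
      else
        (K * (b * g * p0 - (1 - b) * p1), K * (a * p0 - (1 - a) * g * p1))
  end.

Definition P0 a b u := fst (P01 a b u).
Definition P1 a b u := snd (P01 a b u).

Definition D1 a b := (gam a b)^2 * ((1 - a) + b)^2 - 4 * a * (1 - b).
Definition D2 a b := (a + (1 - b))^2 - 4 * (1 - a) * b * (gam a b)^2.

(* sets L_i; a set whose defining bounds involve the square root of a
   negative number is taken to be empty (guard 0 <= D) *)
Definition L1 a b (be : R) : Prop := let g := gam a b in
  0 <= D1 a b /\
  Rmax ((1 - a) / (1 - b) * g) ((g * ((1 - a) + b) - sqrt (D1 a b)) / (2 * (1 - b))) <= be /\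
  be <= (g * ((1 - a) + b) + sqrt (D1 a b)) / (2 * (1 - b)).
Definition L2 a b (be : R) : Prop := let g := gam a b in
  0 <= D2 a b /\
  ((a + (1 - b)) + sqrt (D2 a b)) / (2 * b * g) <= be /\
  be <= (1 - a) / (1 - b) * g.
Definition L3 a b (be : R) : Prop := let g := gam a b in
  0 <= D2 a b /\
  be <= Rmin ((1 - a) / (1 - b) * g) (((a + (1 - b)) - sqrt (D2 a b)) / (2 * b * g)).
Definition L4 a b (be : R) : Prop := let g := gam a b in
  0 <= D1 a b /\
  be <= Rmin (b * g / a) ((g * ((1 - a) + b) - sqrt (D1 a b)) / (2 * a)).
Definition L5 a b (be : R) : Prop := let g := gam a b in
  0 <= D1 a b /\
  (g * ((1 - a) + b) + sqrt (D1 a b)) / (2 * a) <= be /\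
  be <= b * g / a.
Definition L6 a b (be : R) : Prop := let g := gam a b in
  0 <= D2 a b /\
  Rmax (b * g / a) (((a + (1 - b)) - sqrt (D2 a b)) / (2 * (1 - a) * g)) <= be /\
  be <= ((a + (1 - b)) + sqrt (D2 a b)) / (2 * (1 - a) * g).
Definition L0 a b (be : R) : Prop := let g := gam a b in
  1 <= be /\ be <= Rmin (a / ((1 - a) * g)) (b * g / (1 - b)).

Definition good a b (be : R) (n : nat) : Prop :=
  forall u : list bool, length u = n ->
    be * P1 a b u >= P0 a b u /\ be * P0 a b u >= P1 a b u.

(* The recursion maps (P_0(u), P_1(u)) to (P_0(x,u), P_1(x,u)) by a linear map, K times a
   fixed 2x2 matrix for x = 0 and its conjugate by the coordinate swap for x = 1; as K > 0
   and the swap leaves the condition invariant, it suffices that this matrix preserves the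
   cone { be p1 >= p0, be p0 >= p1 }. For be >= 1 the cone is generated by (1, be) and
   (be, 1), so a linear map preserves it as soon as it maps these two rays into it. That
   amounts to four quadratic inequalities in be; each of L1, L2, L3 gives two of them
   (one directly, as be lies between or outside the roots of the relevant quadratic, the
   other from the sign constraint on be), and likewise each of L4, L5, L6 the other two. *)

From Stdlib Require Import Reals Lra Psatz List.
Open Scope R_scope.

Section Quadratic.

Variables al B C D : R.
Hypothesis al_gt0 : 0 < al.
Hypothesis D_ge0 : 0 <= D.
Hypothesis D_def : D = B ^ 2 - 4 * al * C.

Local Notation r_lo := ((B - sqrt D) / (2 * al)).
Local Notation r_hi := ((B + sqrt D) / (2 * al)).

Lemma quad_factor x : al * x ^ 2 - B * x + C = al * (x - r_lo) * (x - r_hi).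
Proof.
  pose proof (sqrt_sqrt D D_ge0) as sqrtD.
  replace C with ((B ^ 2 - sqrt D * sqrt D) / (4 * al)) by (rewrite sqrtD, D_def; field; lra).
  field. lra.
Qed.

Lemma quad_roots_le : r_lo <= r_hi.
Proof.
  apply Rmult_le_compat_r; [apply Rlt_le, Rinv_0_lt_compat; lra |].
  pose proof (sqrt_pos D). lra.
Qed.

Lemma quad_ge0_below x : x <= r_lo -> 0 <= al * x ^ 2 - B * x + C.
Proof.
  intro hx. pose proof quad_roots_le. rewrite quad_factor.
  replace (al * (x - r_lo) * (x - r_hi)) with (al * ((r_lo - x) * (r_hi - x))) by ring.
  apply Rmult_le_pos; [lra | apply Rmult_le_pos; lra].
Qed.

Lemma quad_ge0_above x : r_hi <= x -> 0 <= al * x ^ 2 - B * x + C.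
Proof.
  intro hx. pose proof quad_roots_le. rewrite quad_factor.
  apply Rmult_le_pos; [apply Rmult_le_pos |]; lra.
Qed.

Lemma quad_le0_between x : r_lo <= x <= r_hi -> al * x ^ 2 - B * x + C <= 0.
Proof.
  intro hx. rewrite quad_factor.
  replace (al * (x - r_lo) * (x - r_hi)) with (- (al * ((x - r_lo) * (r_hi - x)))) by ring.
  assert (0 <= al * ((x - r_lo) * (r_hi - x))) by (apply Rmult_le_pos; [| apply Rmult_le_pos]; lra).
  lra.
Qed.

End Quadratic.

Definition in_cone (be : R) (p : R * R) : Prop :=
  be * snd p >= fst p /\ be * fst p >= snd p.

Definition lin (m00 m01 m10 m11 : R) (p : R * R) : R * R :=
  (m00 * fst p + m01 * snd p, m10 * fst p + m11 * snd p).

Definition flip (p : R * R) : R * R := (snd p, fst p).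

Definition scale (k : R) (p : R * R) : R * R := (k * fst p, k * snd p).

(* The values of the form [c0 * p0 + c1 * p1] at the two extreme rays [(1, be)] and [(be, 1)]. *)
Definition cone_form_ok (be c0 c1 : R) : Prop :=
  0 <= c0 + c1 * be /\ 0 <= c0 * be + c1.

Lemma cone_form_ok_sym be c0 c1 : cone_form_ok be c0 c1 -> cone_form_ok be c1 c0.
Proof. unfold cone_form_ok. lra. Qed.

Lemma cone_form_ok_of_lo be c0 c1 :
  1 <= be -> c1 <= 0 -> 0 <= c0 + c1 * be -> cone_form_ok be c0 c1.
Proof.
  intros hbe hc1 hlo. split; [exact hlo |].
  replace (c0 * be + c1) with (be * (c0 + c1 * be) + (- c1) * (be * be - 1)) by ring.
  assert (0 <= be * (c0 + c1 * be)) by (apply Rmult_le_pos; lra).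
  assert (0 <= (- c1) * (be * be - 1)) by (apply Rmult_le_pos; nra).
  lra.
Qed.

Lemma cone_form_ok_of_hi be c0 c1 :
  1 <= be -> 0 <= c1 -> 0 <= c0 * be + c1 -> cone_form_ok be c0 c1.
Proof.
  intros hbe hc1 hhi. split; [| exact hhi].
  assert (hbX : 0 <= be * (c0 + c1 * be)).
  { replace (be * (c0 + c1 * be)) with ((c0 * be + c1) + c1 * (be * be - 1)) by ring.
    assert (0 <= c1 * (be * be - 1)) by (apply Rmult_le_pos; nra).
    lra. }
  destruct (Rle_or_lt 0 (c0 + c1 * be)) as [| hneg]; [assumption |].
  assert (be * (c0 + c1 * be) < 0) by (apply Rmult_pos_neg; lra).
  lra.
Qed.

(* For [be > 1] the cone is spanned by [(1, be)] and [(be, 1)]: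
   [(be^2 - 1) (c0 p0 + c1 p1)] is a nonnegative combination of the two forms' values. *)
Lemma cone_form_nonneg be c0 c1 p :
  1 < be -> cone_form_ok be c0 c1 -> in_cone be p -> 0 <= c0 * fst p + c1 * snd p.
Proof.
  destruct p as [p0 p1]; unfold cone_form_ok, in_cone; simpl.
  intros hbe [hX hY] [h1 h2].
  assert (hid : (be * be - 1) * (c0 * p0 + c1 * p1)
                = (be * p1 - p0) * (c0 + c1 * be) + (be * p0 - p1) * (c0 * be + c1)) by ring.
  assert (0 <= (be * p1 - p0) * (c0 + c1 * be)) by (apply Rmult_le_pos; lra).
  assert (0 <= (be * p0 - p1) * (c0 * be + c1)) by (apply Rmult_le_pos; lra).
  assert (0 < be * be - 1) by nra.
  nra.
Qed.

Lemma in_cone_lin be m00 m01 m10 m11 p :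
  1 <= be ->
  in_cone be (lin m00 m01 m10 m11 (1, be)) -> in_cone be (lin m00 m01 m10 m11 (be, 1)) ->
  in_cone be p -> in_cone be (lin m00 m01 m10 m11 p).
Proof.
  intros hbe h1 h2 hp.
  destruct (Req_dec be 1) as [-> | hne].
  (* At [be = 1] the cone degenerates to the diagonal, a full line. *)
  - destruct p as [p0 p1]; unfold in_cone, lin in *; simpl in *.
    replace p1 with p0 by lra.
    replace (m10 * p0 + m11 * p0) with ((m10 + m11) * p0) by ring.
    replace (m10 + m11) with (m00 + m01) by lra.
    lra.
  - assert (hbe1 : 1 < be) by lra.
    unfold in_cone, lin in *; simpl in *.
    assert (0 <= (be * m10 - m00) * fst p + (be * m11 - m01) * snd p).
    { apply (cone_form_nonneg be); [exact hbe1 | unfold cone_form_ok; split; nra | exact hp]. }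
    assert (0 <= (be * m00 - m10) * fst p + (be * m01 - m11) * snd p).
    { apply (cone_form_nonneg be); [exact hbe1 | unfold cone_form_ok; split; nra | exact hp]. }
    split; lra.
Qed.

Lemma in_cone_flip be p : in_cone be p -> in_cone be (flip p).
Proof. unfold in_cone, flip; simpl; tauto. Qed.

Lemma in_cone_scale be k p : 0 <= k -> in_cone be p -> in_cone be (scale k p).
Proof.
  destruct p as [p0 p1]; unfold in_cone, scale; simpl. intros hk [h1 h2].
  split; apply Rle_ge; [replace (be * (k * p1)) with (k * (be * p1)) by ring
                       | replace (be * (k * p0)) with (k * (be * p0)) by ring];
    apply Rmult_le_compat_l; lra.
Qed.

Lemma gam_pos a b : 0 < gam a b.
Proof. unfold gam, Rpower. apply exp_pos. Qed.

Lemma Kc_pos a b : a + b > 1 -> 0 < Kc a b.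
Proof.
  intro hab. pose proof (gam_pos a b). unfold Kc.
  apply Rdiv_lt_0_compat; [lra | apply Rmult_lt_0_compat; lra].
Qed.

Definition step0 (a b : R) : R * R -> R * R :=
  lin (b * gam a b) (- (1 - b)) a (- ((1 - a) * gam a b)).

Lemma P01_cons_false a b u :
  P01 a b (false :: u) = scale (Kc a b) (step0 a b (P01 a b u)).
Proof. unfold scale, step0, lin; simpl; f_equal; ring. Qed.

Lemma P01_cons_true a b u :
  P01 a b (true :: u) = flip (scale (Kc a b) (step0 a b (flip (P01 a b u)))).
Proof. unfold flip, scale, step0, lin; simpl; f_equal; ring. Qed.

Section Invariant.

Variables a b be : R.
Hypotheses (a_gt0 : 0 < a) (a_lt1 : a < 1) (b_gt0 : 0 < b) (b_lt1 : b < 1).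
Hypothesis be_ge1 : 1 <= be.

Local Notation g := (gam a b).

Lemma L123_cone_form :
  L1 a b be \/ L2 a b be \/ L3 a b be ->
  cone_form_ok be (be * b * g - a) ((1 - a) * g - be * (1 - b)).
Proof.
  pose proof (gam_pos a b) as g_gt0.
  assert (ratio : (1 - a) / (1 - b) * g * (1 - b) = (1 - a) * g) by (field; lra).
  assert (D1_def : D1 a b = (g * ((1 - a) + b)) ^ 2 - 4 * (1 - b) * a) by (unfold D1; ring).
  assert (D2_def : D2 a b = (a + (1 - b)) ^ 2 - 4 * (b * g) * ((1 - a) * g))
    by (unfold D2; ring).
  unfold L1, L2, L3; replace (2 * b * g) with (2 * (b * g)) by ring.
  intros [[hD [hlo hhi]] | [[hD [hlo hhi]] | [hD hhi]]].
  - pose proof (Rle_trans _ _ _ (Rmax_l _ _) hlo).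
    pose proof (Rle_trans _ _ _ (Rmax_r _ _) hlo).
    pose proof (quad_le0_between (1 - b) (g * ((1 - a) + b)) a (D1 a b) ltac:(lra) hD D1_def be
                  ltac:(split; assumption)).
    apply cone_form_ok_of_lo; nra.
  - pose proof (quad_ge0_above (b * g) (a + (1 - b)) ((1 - a) * g) (D2 a b) ltac:(nra) hD D2_def be hlo).
    apply cone_form_ok_of_hi; nra.
  - pose proof (Rle_trans _ _ _ hhi (Rmin_l _ _)).
    pose proof (Rle_trans _ _ _ hhi (Rmin_r _ _)).
    pose proof (quad_ge0_below (b * g) (a + (1 - b)) ((1 - a) * g) (D2 a b) ltac:(nra)
                  hD D2_def be ltac:(assumption)).
    apply cone_form_ok_of_hi; nra.
Qed.

Lemma L456_cone_form :
  L4 a b be \/ L5 a b be \/ L6 a b be ->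
  cone_form_ok be (be * a - b * g) ((1 - b) - be * (1 - a) * g).
Proof.
  pose proof (gam_pos a b) as g_gt0.
  assert (ratio : b * g / a * a = b * g) by (field; lra).
  assert (D1_def : D1 a b = (g * ((1 - a) + b)) ^ 2 - 4 * a * (1 - b)) by (unfold D1; ring).
  assert (D2_def : D2 a b = (a + (1 - b)) ^ 2 - 4 * ((1 - a) * g) * (b * g))
    by (unfold D2; ring).
  unfold L4, L5, L6; replace (2 * (1 - a) * g) with (2 * ((1 - a) * g)) by ring.
  intro hL; apply cone_form_ok_sym.
  destruct hL as [[hD hhi] | [[hD [hlo hhi]] | [hD [hlo hhi]]]].
  - pose proof (Rle_trans _ _ _ hhi (Rmin_l _ _)).
    pose proof (Rle_trans _ _ _ hhi (Rmin_r _ _)).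
    pose proof (quad_ge0_below a (g * ((1 - a) + b)) (1 - b) (D1 a b) a_gt0 hD D1_def be
                  ltac:(assumption)).
    apply cone_form_ok_of_lo; nra.
  - pose proof (quad_ge0_above a (g * ((1 - a) + b)) (1 - b) (D1 a b) a_gt0 hD D1_def be hlo).
    apply cone_form_ok_of_lo; nra.
  - pose proof (Rle_trans _ _ _ (Rmax_l _ _) hlo).
    pose proof (Rle_trans _ _ _ (Rmax_r _ _) hlo).
    pose proof (quad_le0_between ((1 - a) * g) (a + (1 - b)) (b * g) (D2 a b) ltac:(nra) hD D2_def be
                  ltac:(split; assumption)).
    apply cone_form_ok_of_hi; nra.
Qed.

Lemma step0_in_cone p :
  cone_form_ok be (be * b * g - a) ((1 - a) * g - be * (1 - b)) ->
  cone_form_ok be (be * a - b * g) ((1 - b) - be * (1 - a) * g) ->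
  in_cone be p -> in_cone be (step0 a b p).
Proof.
  unfold cone_form_ok, step0; intros [hc1 hc2] [hd1 hd2].
  apply in_cone_lin; [exact be_ge1 | |]; unfold in_cone, lin; simpl; split; nra.
Qed.

End Invariant.

Theorem lemma9 (a b : R) (ha0 : 0 <= a) (ha1 : a < 1) (hb0 : 0 <= b) (hb1 : b < 1)
  (hab : a + b > 1) :
  (exists be, (L1 a b be \/ L2 a b be \/ L3 a b be) /\
              (L4 a b be \/ L5 a b be \/ L6 a b be) /\ L0 a b be) ->
  exists be, 1 <= be /\
    be <= Rmin (a / ((1 - a) * gam a b)) (b * gam a b / (1 - b)) /\
    forall n : nat, (1 <= n)%nat -> good a b be (n - 1) -> good a b be n.
Proof.
  intros [be [hL123 [hL456 [be_ge1 be_le]]]].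
  exists be; split; [exact be_ge1 | split; [exact be_le |]].
  assert (ha : 0 < a) by lra. assert (hb : 0 < b) by lra.
  assert (hstep : forall p, in_cone be p -> in_cone be (scale (Kc a b) (step0 a b p))).
  { intros p hp. apply in_cone_scale; [apply Rlt_le, Kc_pos; exact hab |].
    apply step0_in_cone; [| apply L123_cone_form | apply L456_cone_form |]; assumption. }
  intros n hn hgood [| x u] hu; simpl in hu; [lia |].
  change (in_cone be (P01 a b (x :: u))).
  assert (hu_good : in_cone be (P01 a b u)) by (apply hgood; lia).
  destruct x.
  - rewrite P01_cons_true. apply in_cone_flip, hstep, in_cone_flip, hu_good.
  - rewrite P01_cons_false. apply hstep, hu_good.
Qed.
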